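(* Let $\mathbb{X},\mathbb{Y}$ be real Banach spaces, $x\in S_{\mathbb{X}}$, $y\in S_{\mathbb{Y}}$. Then: (i) If $(x,y)$ is a CPP then $(x,y)$ is a weak CPP; the converse fails in general: in $\ell_\infty^2$, $((1,1),(1,-1))$ is a weak CPP but not a CPP. (ii) If $\mathbb{H}$ is a real Hilbert space, then for any $x,y\in S_{\mathbb{H}}$ the pair $(x,y)$ is a CPP, and $(r,1)$ is a CPP constant for it for every $r>0$. (iii) For every $x\in S_{\mathbb{X}}$, $(x,x)$ is a weak CPP; but $(x,x)$ need not be a CPP: in $\ell_\infty^2$, $((1,1),(1,1))$ is not a CPP. (iv) A pair need not be a weak CPP: in $\ell_\infty^2$, $((1,0),(1,1/2))$ is a weak CPP, but $((1,0),(1,1))$ is not a weak CPP. (v) If $(r_0,\mu_0)$ is a weak CPP constant (respectively, a CPP constant) for $(x,y)$, then $(r,\mu)$ is a weak CPP constant (respectively, a CPP constant) for $(x,y)$ for all $0<r\le r_0$ and $0<\mu\le\mu_0$. (vi) If $(x,y)$ is a CPP and $x$ is not an extreme point of $B_{\mathbb{X}}$, then $y$ is not an extreme point of $B_{\mathbb{Y}}$. The converse fails: in $\ell_\infty^2$, $((1,1),(1,0))$ is a CPP, $(1,0)$ is not an extreme point of $B_{\ell_\infty^2}$, while $(1,1)$ is an extreme point of $B_{\ell_\infty^2}$.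
   Context: All Banach spaces are real and of dimension greater than $1$. $B_{\mathbb{X}}$ and $S_{\mathbb{X}}$ denote the closed unit ball and unit sphere; $B(x,r)=\{u:\|u-x\|<r\}$. For $x,y\in\mathbb{X}$, $x\perp_B y$ (Birkhoff–James orthogonality) means $\|x+\lambda y\|\ge\|x\|$ for all $\lambda\in\mathbb{R}$, and $x^{\perp}=\{y\in\mathbb{X}: x\perp_B y\}$. For $x\in S_{\mathbb{X}}$, $y\in S_{\mathbb{Y}}$: $(x,y)$ is a weak CPP (weakly compatible point pair) if there exist $z\in x^\perp\cap S_{\mathbb{X}}$, $w\in y^\perp\cap S_{\mathbb{Y}}$ and constants $r>0,\mu>0$ such that for all $a,b\in\mathbb{R}$, $ax+bz\in B(x,r)\cap S_{\mathbb{X}}$ implies $\|ay+b\mu w\|\le 1$; any such $(r,\mu)$ is a weak CPP constant for $(x,y)$. $(x,y)$ is a CPP (compatible point pair) if there exist $r>0,\mu>0$ such that for all $z\in x^\perp\cap S_{\mathbb{X}}$, all $w\in y^\perp\cap S_{\mathbb{Y}}$ and all $a,b\in\mathbb{R}$, $ax+bz\in B(x,r)\cap S_{\mathbb{X}}$ implies $\|ay+b\mu w\|\le1$; any such $(r,\mu)$ is a CPP constant for $(x,y)$. $\ell_\infty^2$ is $\mathbb{R}^2$ with the max norm. *)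

From mathcomp Require Import all_boot all_order all_algebra.
From mathcomp Require Import all_classical all_reals all_analysis.
Import Order.TTheory GRing.Theory Num.Theory.
Set Implicit Arguments. Unset Strict Implicit. Unset Printing Implicit Defensive.
Local Open Scope ring_scope.

Section CPPDefs.
Variable R : realType.

Definition BJ_orth (X : normedModType R) (x y : X) : Prop :=
  forall l : R, `|x| <= `|x + l *: y|.

(* standing assumption: dimension greater than 1 (two linearly independent vectors) *)
Definition dim_gt1 (X : normedModType R) : Prop :=
  exists u v : X, forall a b : R, a *: u + b *: v = 0 -> a = 0 /\ b = 0.

Definition weak_cpp_const (X Y : normedModType R) (x : X) (y : Y) (r mu : R) : Prop :=
  0 < r /\ 0 < mu /\
  exists (z : X) (w : Y),
    BJ_orth x z /\ `|z| = 1 /\ BJ_orth y w /\ `|w| = 1 /\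
    forall a b : R,
      `|(a *: x + b *: z) - x| < r -> `|a *: x + b *: z| = 1 ->
      `|a *: y + b *: (mu *: w)| <= 1.

Definition weak_cpp (X Y : normedModType R) (x : X) (y : Y) : Prop :=
  exists r mu : R, weak_cpp_const x y r mu.

Definition cpp_const (X Y : normedModType R) (x : X) (y : Y) (r mu : R) : Prop :=
  0 < r /\ 0 < mu /\
  forall (z : X) (w : Y),
    BJ_orth x z -> `|z| = 1 -> BJ_orth y w -> `|w| = 1 ->
    forall a b : R,
      `|(a *: x + b *: z) - x| < r -> `|a *: x + b *: z| = 1 ->
      `|a *: y + b *: (mu *: w)| <= 1.

Definition cpp (X Y : normedModType R) (x : X) (y : Y) : Prop :=
  exists r mu : R, cpp_const x y r mu.

Definition extreme_point_ball (X : normedModType R) (x : X) : Prop :=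
  `|x| <= 1 /\
  forall (u v : X) (t : R), `|u| <= 1 -> `|v| <= 1 -> 0 < t < 1 ->
    x = t *: u + (1 - t) *: v -> u = v.

Definition is_inner_product (H : normedModType R) (ip : H -> H -> R) : Prop :=
  (forall x y : H, ip x y = ip y x) /\
  (forall (a : R) (x y z : H), ip (a *: x + y) z = a * ip x z + ip y z) /\
  (forall x : H, `|x| ^+ 2 = ip x x).

(* ell_infty^2: 'rV[R]_2 carries the max norm in MathComp-Analysis *)
Definition linf2 : normedModType R := 'rV[R]_2.
Definition vec2 (a b : R) : linf2 := \row_(i < 2) (if i == ord0 then a else b).

End CPPDefs.

From mathcomp Require Import all_boot all_order all_algebra.
From mathcomp Require Import all_classical all_reals all_analysis.
From mathcomp Require Import ring lra.
Set Implicit Arguments.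
Unset Strict Implicit.
Unset Printing Implicit Defensive.
Import Order.TTheory GRing.Theory Num.Theory.
Local Open Scope ring_scope.

(* Orthogonal unit vectors exist in every normed space of dimension at least 2
   by a planar connectedness argument, which gives the general halves of (i)
   and (iii).  In an inner product space orthogonal unit pairs are isometric to
   each other, which gives (ii); shrinking the constants in (v) is convexity of
   the ball.  For (vi), a non-extreme unit [x] is the centre of a segment in the
   sphere whose direction is orthogonal to [x]; the CPP inequality carries it to
   a segment of the ball centred at [y]. *)

Section BirkhoffJames.
Variable R : realType.
Variable X : normedModType R.
Implicit Types (x z d u v : X) (a b l s t : R).

Lemma BJ_orthZ x z a : BJ_orth x z -> BJ_orth x (a *: z).
Proof. by move=> xz l; rewrite scalerA; apply: xz. Qed.

Lemma BJ_orth_coef_le x z a b :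
  BJ_orth x z -> `|x| = 1 -> `|a| <= `|a *: x + b *: z|.
Proof.
move=> xz x1; have [->|a0] := eqVneq a 0; first by rewrite normr0.
have -> : a *: x + b *: z = a *: (x + (b / a) *: z).
  by rewrite scalerDr scalerA mulrC divfK.
by rewrite normrZ -{1}(mulr1 `|a|) ler_pM2l ?normr_gt0 // -x1; apply: xz.
Qed.

Lemma norm_convex_le u v t c : 0 <= t <= 1 ->
  `|u| <= c -> `|v| <= c -> `|(1 - t) *: u + t *: v| <= c.
Proof.
move=> /andP[t0 t1] uc vc; have t1' : 0 <= 1 - t by rewrite subr_ge0.
apply: le_trans (ler_normD _ _) _; rewrite !normrZ (ger0_norm t0) (ger0_norm t1').
have : (1 - t) * `|u| <= (1 - t) * c by rewrite ler_wpM2l.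
have : t * `|v| <= t * c by rewrite ler_wpM2l.
lra.
Qed.

Lemma norm_convex_lt u v t c : 0 < t < 1 ->
  `|u| < c -> `|v| < c -> `|(1 - t) *: u + t *: v| < c.
Proof.
move=> /andP[t0 t1] uc vc; have t1' : 0 < 1 - t by rewrite subr_gt0.
apply: le_lt_trans (ler_normD _ _) _; rewrite !normrZ (gtr0_norm t0) (gtr0_norm t1').
have : (1 - t) * `|u| < (1 - t) * c by rewrite ltr_pM2l.
have : t * `|v| < t * c by rewrite ltr_pM2l.
lra.
Qed.

Lemma convex_combE u v t : (1 - t) *: u + t *: v = u + t *: (v - u).
Proof. by rewrite scalerBl scale1r scalerBr addrA addrAC. Qed.

(* A local minimum at 0 of the convex function l |-> |x + l d| is global. *)
Lemma BJ_orth_local x d e : 0 < e ->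
  (forall s, `|s| <= e -> `|x| <= `|x + s *: d|) -> BJ_orth x d.
Proof.
move=> e0 loc l; have [le|gt] := leP `|l| e; first exact: loc.
have l0 : 0 < `|l| by apply: lt_trans gt.
pose k := e / `|l|.
have k0 : 0 < k by rewrite divr_gt0.
have k1 : k < 1 by rewrite ltr_pdivrMr // mul1r.
have : `|x| <= `|x + (k * l) *: d|.
  by apply: loc; rewrite normrM gtr0_norm // divfK ?gt_eqF.
have -> : x + (k * l) *: d = (1 - k) *: x + k *: (x + l *: d).
  by rewrite scalerDr scalerA addrA -scalerDl subrK scale1r.
have k1' : 0 < 1 - k by rewrite subr_gt0.
move=> H; have := le_trans H (ler_normD _ _).
rewrite (normrZ (1 - k)) (normrZ k) (gtr0_norm k0) (gtr0_norm k1') => {}H.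
by rewrite -(ler_pM2l k0); lra.
Qed.

Definition shortens x d := exists2 l, 0 < l & `|x + l *: d| < 1.

Lemma BJ_orth_not_shortens x d :
  `|x| = 1 -> ~ shortens x d -> ~ shortens x (- d) -> BJ_orth x d.
Proof.
move=> x1 nd nNd l; rewrite x1 leNgt; apply/negP.
have [l0|l0|->] := ltgtP l 0 => lt1.
- by apply: nNd; exists (- l); rewrite ?oppr_gt0 // scaleNr scalerN opprK.
- by apply: nd; exists l.
- by rewrite scale0r addr0 x1 ltxx in lt1.
Qed.

Lemma shortens_opp_excl x d : `|x| = 1 -> shortens x d -> ~ shortens x (- d).
Proof.
move=> x1 [l l0 hl] [m m0 hm].
have lm : 0 < l + m by rewrite addr_gt0.
pose t := l / (l + m).
have t01 : 0 < t < 1.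
  by rewrite divr_gt0 //= ltr_pdivrMr // mul1r ltrDl.
have : `|(1 - t) *: (x + l *: d) + t *: (x + m *: - d)| < 1.
  exact: norm_convex_lt.
have -> : (1 - t) *: (x + l *: d) + t *: (x + m *: - d) = x.
  rewrite !scalerDr !scalerN !scalerA addrACA -scalerDl subrK scale1r.
  suff -> : (1 - t) * l = t * m by rewrite subrr addr0.
  by rewrite /t; field; rewrite gt_eqF.
by rewrite x1 ltxx.
Qed.

Lemma shortens_open x d : shortens x d ->
  exists2 e, 0 < e & forall h, `|h| < e -> shortens x (d + h).
Proof.
move=> [l l0 hl]; exists ((1 - `|x + l *: d|) / l); first by rewrite divr_gt0 ?subr_gt0.
move=> h hh; exists l => //; rewrite scalerDr addrA.
apply: le_lt_trans (ler_normD _ _) _; rewrite normrZ gtr0_norm //.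
move: hh; rewrite ltr_pdivlMr // mulrC; lra.
Qed.

Lemma shortens_far x u t : `|x| = 1 -> `|u| < t -> shortens x (u - t *: x).
Proof.
move=> x1 ut; have t0 : 0 < t by apply: le_lt_trans ut.
exists (2 * t)^-1; first by rewrite invr_gt0 mulr_gt0.
have -> : x + (2 * t)^-1 *: (u - t *: x) = 2^-1 *: x + (2 * t)^-1 *: u.
  have half : (2 * t)^-1 * t = 2^-1 by field; rewrite gt_eqF.
  rewrite scalerBr scalerA half addrCA addrC; congr (_ + _).
  by rewrite -{1}[x]scale1r -scalerBl; congr (_ *: _); field.
apply: le_lt_trans (ler_normD _ _) _.
rewrite !normrZ x1 mulr1 !gtr0_norm ?invr_gt0 ?mulr_gt0 //.
have : `|u| / t < 1 by rewrite ltr_pdivrMr // mul1r.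
have -> : (2 * t)^-1 * `|u| = 2^-1 * (`|u| / t) by field; rewrite gt_eqF.
lra.
Qed.

(* The parameters [t] for which [u - t x] shortens [x] and those for which
   [-(u - t x)] does form disjoint open sets containing all large, resp. all
   small, [t]; [sup] of the second set lies in neither, which is orthogonality. *)
Lemma exists_BJ_orth_line x u : `|x| = 1 -> exists s, BJ_orth x (u - s *: x).
Proof.
move=> x1.
pose A t := shortens x (u - t *: x); pose B t := shortens x (- (u - t *: x)).
have AB t : A t -> B t -> False by exact: shortens_opp_excl.
have shiftE t t' : u - t' *: x = (u - t *: x) + (t - t') *: x.
  by rewrite scalerBl addrA subrK.
have shiftNE t t' : - (u - t' *: x) = - (u - t *: x) + (t' - t) *: x.
  by rewrite (shiftE t) opprD; congr (_ + _); rewrite -scaleNr opprB.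
have Aop t : A t -> exists2 e, 0 < e & forall t', `|t' - t| < e -> A t'.
  move=> /shortens_open[e e0 he]; exists e => // t' tt'.
  by rewrite /A (shiftE t); apply: he; rewrite normrZ x1 mulr1 distrC.
have Bop t : B t -> exists2 e, 0 < e & forall t', `|t' - t| < e -> B t'.
  move=> /shortens_open[e e0 he]; exists e => // t' tt'.
  by rewrite /B (shiftNE t); apply: he; rewrite normrZ x1 mulr1.
have Bfar t : t < - `|u| -> B t.
  move=> tu; rewrite /B (_ : - (u - t *: x) = - u - (- t) *: x).
    by apply: shortens_far; rewrite // normrN ltrNr.
  by rewrite opprD scaleNr !opprK.
have Bub : ubound B (`|u| + 1).
  move=> t Bt; rewrite leNgt; apply/negP => tu; apply: (AB t) => //.
  by apply: shortens_far => //; apply: lt_trans tu; rewrite ltrDl.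
have hsB : has_sup B.
  by split; [exists (- (`|u| + 1)); apply: Bfar; rewrite ltrN2 ltrDl | exists (`|u| + 1)].
exists (sup B); apply: BJ_orth_not_shortens => // [/(Aop _)[e e0 he]|/(Bop _)[e e0 he]].
- have [b Bb bs] := sup_adherent e0 hsB.
  have bB : b <= sup B := sup_upper_bound hsB Bb.
  by apply: (AB b) => //; apply: he; rewrite ler0_norm ?subr_le0 //; lra.
- have : B (sup B + e / 2) by apply: he; rewrite addrC addKr gtr0_norm; lra.
  by move/(sup_upper_bound hsB); lra.
Qed.

Lemma exists_outside_span x : dim_gt1 X -> exists u, forall t, u - t *: x != 0.
Proof.
case=> u [v indep].
have [[s us]|] := pselect (exists s, u = s *: x); last first.
  move=> nu; exists u => t; apply/eqP => /eqP; rewrite subr_eq0 => /eqP ut.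
  by apply: nu; exists t.
have [[t vt]|] := pselect (exists t, v = t *: x); last first.
  move=> nv; exists v => t'; apply/eqP => /eqP; rewrite subr_eq0 => /eqP vt.
  by apply: nv; exists t'.
have [_ s0] : t = 0 /\ - s = 0.
  by apply: indep; rewrite us vt !scalerA mulNr scaleNr mulrC subrr.
have u0 : u = 0 by rewrite us -[s]opprK s0 oppr0 scale0r.
have [/eqP] := indep 1 0 ltac:(by rewrite u0 scaler0 scale0r addr0).
by rewrite oner_eq0.
Qed.

Lemma exists_BJ_orth_unit x : dim_gt1 X -> `|x| = 1 ->
  exists z, BJ_orth x z /\ `|z| = 1.
Proof.
move=> /(exists_outside_span x)[u hu] x1; have [s xs] := exists_BJ_orth_line u x1.
exists (`|u - s *: x|^-1 *: (u - s *: x)); split; first exact: BJ_orthZ.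
by rewrite normrZ normfV normr_id mulVf // normr_eq0.
Qed.

End BirkhoffJames.

Section InnerProduct.
Variable R : realType.
Variable H : normedModType R.
Variable ip : H -> H -> R.
Hypothesis ipP : is_inner_product ip.
Implicit Types (x y z : H) (a b r : R).

Lemma ipDl x y z : ip (x + y) z = ip x z + ip y z.
Proof. by case: ipP => _ [lin _]; have := lin 1 x y z; rewrite scale1r mul1r. Qed.

Lemma ipZl a x z : ip (a *: x) z = a * ip x z.
Proof.
case: ipP => _ [lin _]; have ip0 : ip 0 z = 0.
  by have := lin 1 0 0 z; rewrite scaler0 addr0 mul1r => ?; lra.
by rewrite -[a *: x]addr0 lin ip0 addr0.
Qed.

Lemma sqr_norm_comb a b x z :
  `|a *: x + b *: z| ^+ 2 = a ^+ 2 * ip x x + 2 * a * b * ip x z + b ^+ 2 * ip z z.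
Proof.
case: ipP => sym [_ ->]; rewrite !ipDl !ipZl (sym x) (sym z) !ipDl !ipZl (sym z x).
ring.
Qed.

Lemma ip_unit x : `|x| = 1 -> ip x x = 1.
Proof. by case: ipP => _ [_ hn] x1; rewrite -hn x1 expr1n. Qed.

(* Test orthogonality at [l = - ip x z], where [|x + l z|^2 = 1 - (ip x z)^2]. *)
Lemma ip_BJ_orth x z : `|x| = 1 -> `|z| = 1 -> BJ_orth x z -> ip x z = 0.
Proof.
move=> x1 z1 xz; have le1 := xz (- ip x z); rewrite x1 in le1.
have := sqr_norm_comb 1 (- ip x z) x z; rewrite scale1r !ip_unit // => E.
have : ip x z ^+ 2 <= 0 by nra.
by rewrite le_eqVlt ltNge sqr_ge0 orbF sqrf_eq0 => /eqP.
Qed.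

Lemma sqr_norm_BJ_orth_comb a b x z : `|x| = 1 -> `|z| = 1 -> BJ_orth x z ->
  `|a *: x + b *: z| ^+ 2 = a ^+ 2 + b ^+ 2.
Proof. by move=> x1 z1 xz; rewrite sqr_norm_comb (ip_BJ_orth x1 z1 xz) !ip_unit //; ring. Qed.

Lemma inner_product_cpp_const x y r : `|x| = 1 -> `|y| = 1 -> 0 < r ->
  cpp_const x y r 1.
Proof.
move=> x1 y1 r0; split=> //; split=> // z w xz z1 yw w1 a b _ n1.
have := sqr_norm_BJ_orth_comb a b x1 z1 xz.
rewrite scale1r n1 -(sqr_norm_BJ_orth_comb a b y1 w1 yw) expr1n => /esym/eqP.
by rewrite sqrp_eq1 // => /eqP->.
Qed.

End InnerProduct.

Section CompatiblePairs.
Variable R : realType.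
Variables X Y : normedModType R.
Implicit Types (x z : X) (y w : Y) (a b r mu : R).

Definition compat_with x y z w r mu := forall a b,
  `|(a *: x + b *: z) - x| < r -> `|a *: x + b *: z| = 1 ->
  `|a *: y + b *: (mu *: w)| <= 1.

Lemma compat_withW x y z w r0 mu0 r mu :
  `|x| = 1 -> `|y| = 1 -> BJ_orth x z -> r <= r0 -> 0 < mu <= mu0 ->
  compat_with x y z w r0 mu0 -> compat_with x y z w r mu.
Proof.
move=> x1 y1 xz rr0 /andP[mu_gt0 mumu0] compat a b near n1.
have mu0_gt0 : 0 < mu0 by apply: lt_le_trans mumu0.
have a1 : `|a *: y| <= 1 by rewrite normrZ y1 mulr1 -n1 BJ_orth_coef_le.
have t01 : 0 <= mu / mu0 <= 1.
  by rewrite ler_pdivrMr // mul1r mumu0 andbT divr_ge0 // ltW.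
have := norm_convex_le t01 a1 (compat a b (lt_le_trans near rr0) n1).
congr (_ <= _); congr `|_|.
rewrite scalerDr addrA -scalerDl subrK scale1r !scalerA; congr (_ + _ *: _).
by field; rewrite gt_eqF.
Qed.

Lemma weak_cpp_constW x y r0 mu0 r mu : `|x| = 1 -> `|y| = 1 ->
  weak_cpp_const x y r0 mu0 -> 0 < r <= r0 -> 0 < mu <= mu0 ->
  weak_cpp_const x y r mu.
Proof.
move=> x1 y1 [_ [_ [z [w [xz [z1 [yw [w1 compat]]]]]]]] /andP[r_gt0 rr0] mumu0.
split=> //; split; first by case/andP: mumu0.
by exists z, w; do 4!split=> //; apply: compat_withW compat.
Qed.

Lemma cpp_constW x y r0 mu0 r mu : `|x| = 1 -> `|y| = 1 ->
  cpp_const x y r0 mu0 -> 0 < r <= r0 -> 0 < mu <= mu0 -> cpp_const x y r mu.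
Proof.
move=> x1 y1 [_ [_ compat]] /andP[r_gt0 rr0] mumu0.
split=> //; split; first by case/andP: mumu0.
by move=> z w xz z1 yw w1; apply: compat_withW (compat _ _ xz z1 yw w1).
Qed.

Lemma cpp_weak_cpp x y : dim_gt1 X -> dim_gt1 Y -> `|x| = 1 -> `|y| = 1 ->
  cpp x y -> weak_cpp x y.
Proof.
move=> dX dY x1 y1 [r [mu [r_gt0 [mu_gt0 compat]]]].
have [z [xz z1]] := exists_BJ_orth_unit dX x1.
have [w [yw w1]] := exists_BJ_orth_unit dY y1.
by exists r, mu; split=> //; split=> //; exists z, w; do 4!split=> //; apply: compat.
Qed.

End CompatiblePairs.

Lemma weak_cpp_diag (R : realType) (X : normedModType R) (x : X) :
  dim_gt1 X -> `|x| = 1 -> weak_cpp x x.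
Proof.
move=> dX x1; have [z [xz z1]] := exists_BJ_orth_unit dX x1.
exists 1, 1; split=> //; split=> //; exists z, z; do 4!split=> //.
by move=> a b _ n1; rewrite scale1r n1.
Qed.

Section ExtremePoints.
Variable R : realType.
Variable X : normedModType R.
Implicit Types (x y d : X) (s : R).

Lemma midpoint_sym x d : x = 2^-1 *: (x + d) + (1 - 2^-1) *: (x - d).
Proof.
have -> : 1 - 2^-1 = 2^-1 :> R by field.
by rewrite -scalerDr addrACA subrr addr0 -mulr2n -(scaler_nat 2 x) scalerA mulVf ?scale1r.
Qed.

Lemma norm_eq1_sym x d : `|x| = 1 -> `|x + d| <= 1 -> `|x - d| <= 1 -> `|x + d| = 1.
Proof.
move=> x1 le1 le1'; apply/le_anti; rewrite le1 /=.
have : `|x| <= 2^-1 * `|x + d| + (1 - 2^-1) * `|x - d|.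
  rewrite {1}(midpoint_sym x d); apply: le_trans (ler_normD _ _) _.
  by rewrite !normrZ !gtr0_norm //; lra.
by rewrite x1; lra.
Qed.

Lemma extreme_point_ball_sym y d :
  extreme_point_ball y -> `|y + d| <= 1 -> `|y - d| <= 1 -> d = 0.
Proof.
move=> [_ ext] le1 le1'.
have half : 0 < (2^-1 : R) < 1 by apply/andP; split; lra.
move: (ext _ _ _ le1 le1' half (midpoint_sym y d)) => /addrI/eqP.
by rewrite -subr_eq0 opprK -mulr2n -(scaler_nat 2 d) scaler_eq0 pnatr_eq0 => /eqP.
Qed.

Lemma not_extreme_flat x : `|x| = 1 -> ~ extreme_point_ball x ->
  exists d e, [/\ d != 0, 0 < e & forall s, `|s| <= e -> `|x + s *: d| = 1].
Proof.
move=> x1 nex.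
have [u [v [t [u1 [v1 [t01 [xE uv]]]]]]] : exists u v t, [/\ `|u| <= 1, `|v| <= 1,
    0 < t < 1, x = t *: u + (1 - t) *: v & u <> v].
  apply: contrapT => nuvt; apply: nex; split; first by rewrite x1.
  move=> u v t u1 v1 t01 xE; apply: contrapT => uv; apply: nuvt.
  by exists u, v, t.
have {}xE : x = u + (1 - t) *: (v - u).
  by rewrite -convex_combE (_ : 1 - (1 - t) = t) //; ring.
have seg s : `|s| <= Num.min t (1 - t) -> `|x + s *: (v - u)| <= 1.
  rewrite le_min !ler_norml => /andP[/andP[? ?] /andP[? ?]].
  rewrite xE -addrA -scalerDl -convex_combE; apply: norm_convex_le => //.
  by apply/andP; split; lra.
exists (v - u), (Num.min t (1 - t)); split.
- by rewrite subr_eq0; apply/eqP => vu; apply: uv.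
- by case/andP: t01 => ? ?; rewrite lt_min; apply/andP; split; lra.
- move=> s hs; apply: norm_eq1_sym => //; first exact: seg.
  by rewrite -scaleNr; apply: seg; rewrite normrN.
Qed.

End ExtremePoints.

Lemma cpp_not_extreme (R : realType) (X Y : normedModType R) (x : X) (y : Y) :
  dim_gt1 Y -> `|x| = 1 -> `|y| = 1 ->
  cpp x y -> ~ extreme_point_ball x -> ~ extreme_point_ball y.
Proof.
move=> dY x1 y1 [r [mu [r_gt0 [mu_gt0 compat]]]].
move=> /(not_extreme_flat x1)[d [e [d0 e_gt0 flat]]] ext.
have d_gt0 : 0 < `|d| by rewrite normr_gt0.
pose z := `|d|^-1 *: d.
have z1 : `|z| = 1 by rewrite normrZ normfV normr_id mulVf ?gt_eqF.
have xz : BJ_orth x z.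
  by apply/BJ_orthZ/(BJ_orth_local e_gt0) => s /flat->; rewrite x1.
have [w [yw w1]] := exists_BJ_orth_unit dY y1.
pose b := Num.min (r / 2) (e * `|d|).
have b_gt0 : 0 < b by rewrite lt_min divr_gt0 ?mulr_gt0.
have [b_le_r b_le_e] : b <= r / 2 /\ b <= e * `|d| by split; rewrite ge_min lexx ?orbT.
have bound s : `|s| = b -> `|y + s *: (mu *: w)| <= 1.
  move=> sb; rewrite -[y]scale1r; apply: (compat z w xz z1 yw w1).
    by rewrite scale1r addrAC subrr add0r normrZ z1 mulr1 sb; lra.
  by rewrite scale1r scalerA flat // normrM normfV normr_id sb ler_pdivrMr.
have : b *: (mu *: w) = 0.
  apply: extreme_point_ball_sym ext (bound _ (gtr0_norm b_gt0)) _.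
  by rewrite -scaleNr bound // normrN gtr0_norm.
move/eqP; rewrite !scaler_eq0 (gt_eqF b_gt0) (gt_eqF mu_gt0) -normr_eq0 w1.
by rewrite oner_eq0.
Qed.

Section LinfTwo.
Variable R : realType.
Implicit Types (a b c d p q s l : R) (v : linf2 R).

Lemma vec2D a b c d : vec2 a b + vec2 c d = vec2 (a + c) (b + d).
Proof. by apply/rowP => i; rewrite !mxE; case: ifP. Qed.

Lemma vec2B a b c d : vec2 a b - vec2 c d = vec2 (a - c) (b - d).
Proof. by apply/rowP => i; rewrite !mxE; case: ifP. Qed.

Lemma vec2Z l a b : l *: vec2 a b = vec2 (l * a) (l * b).
Proof. by apply/rowP => i; rewrite !mxE; case: ifP. Qed.

Lemma vec2_inj a b c d : vec2 a b = vec2 c d -> a = c /\ b = d.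
Proof.
by move/rowP => eq_ab; have := eq_ab ord0; have := eq_ab (lift ord0 ord0); rewrite !mxE.
Qed.

Lemma vec2_surj v : exists p q, v = vec2 p q.
Proof.
exists (v ord0 ord0), (v ord0 (lift ord0 ord0)); apply/rowP => -[[|[|//]] i] /=;
  by rewrite !mxE /=; congr (v _ _); apply/val_inj.
Qed.

Lemma norm_vec2 a b : `|vec2 a b| = Num.max `|a| `|b|.
Proof.
rewrite [LHS]/Num.norm /= mx_normrE; apply/le_anti/andP; split.
  apply/bigmax_leP; split=> [|[i j] _]; first by rewrite le_max normr_ge0.
  rewrite !mxE; case: ifP => _; by rewrite le_max lexx ?orbT.
rewrite ge_max; apply/andP; split; apply/bigmax_geP; right.
  by exists (ord0, ord0) => //; rewrite !mxE.
by exists (ord0, lift ord0 ord0) => //; rewrite !mxE.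
Qed.

Lemma norm_vec2_fst a b : `|b| <= `|a| -> `|vec2 a b| = `|a|.
Proof. by move=> ba; rewrite norm_vec2 (max_idPl ba). Qed.

Lemma norm_vec2_snd a b : `|a| <= `|b| -> `|vec2 a b| = `|b|.
Proof. by move=> ab; rewrite norm_vec2 (max_idPr ab). Qed.

Lemma norm_vec2_le a b c :
  `|vec2 a b| <= c <-> [/\ -c <= a, a <= c, -c <= b & b <= c].
Proof.
rewrite norm_vec2 ge_max !ler_norml.
by split=> [/andP[/andP[-> ->] /andP[-> ->]] | [-> -> -> ->]].
Qed.

Lemma norm_vec2_lt a b c :
  `|vec2 a b| < c <-> [/\ -c < a, a < c, -c < b & b < c].
Proof.
rewrite norm_vec2 gt_max !ltr_norml.
by split=> [/andP[/andP[-> ->] /andP[-> ->]] | [-> -> -> ->]].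
Qed.

Lemma norm_vec2_ge a b c :
  c <= `|vec2 a b| <-> [\/ c <= a, c <= - a, c <= b | c <= - b].
Proof. by rewrite norm_vec2 le_max !ler_normr -orbA; split=> /or4P. Qed.

Lemma norm_vec2_eq a b c : `|vec2 a b| = c <->
  [/\ -c <= a, a <= c, -c <= b & b <= c] /\ [\/ c <= a, c <= - a, c <= b | c <= - b].
Proof.
split=> [E | [/norm_vec2_le le_c /norm_vec2_ge ge_c]]; last exact/le_anti/andP.
by split; [apply/norm_vec2_le | apply/norm_vec2_ge]; rewrite E.
Qed.

End LinfTwo.

Section LinfTwoExamples.
Variable R : realType.
Implicit Types (a b c p q s : R).

Lemma BJ_orth_vec2_snd a b s : `|a| = 1 -> `|b| <= 1 -> BJ_orth (vec2 a b) (vec2 0 s).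
Proof.
move=> a1 b1 l; rewrite vec2Z vec2D mulr0 addr0 !norm_vec2 a1 (max_idPl b1).
by rewrite le_max lexx.
Qed.

Lemma BJ_orth_vec2_fst a b s : `|b| = 1 -> `|a| <= 1 -> BJ_orth (vec2 a b) (vec2 s 0).
Proof.
move=> b1 a1 l; rewrite vec2Z vec2D mulr0 addr0 !norm_vec2 b1 (max_idPr a1).
by rewrite le_max lexx orbT.
Qed.

Lemma BJ_orth_vec2_smooth c p q : `|c| < 1 -> `|vec2 p q| <= 1 ->
  BJ_orth (vec2 1 c) (vec2 p q) -> p = 0.
Proof.
move=> c1 /norm_vec2_le[? ? ? ?] orth; have [//|p0] := eqVneq p 0; exfalso.
have /andP[? ?] : - `|c| <= c <= `|c| by rewrite -ler_norml.
pose k := (1 - `|c|) / 2.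
have k_gt0 : 0 < k by rewrite divr_gt0 // subr_gt0.
have pp : 0 < p * p by rewrite lt0r mulf_neq0 //= -expr2 sqr_ge0.
have pp1 : p * p <= 1 by nra.
have /andP[pq1 pq2] : - 1 <= p * q <= 1 by apply/andP; split; nra.
have kpp : 0 < k * (p * p) <= k by rewrite mulr_gt0 //= ler_piMr // ltW.
have kpq : - k <= k * (p * q) <= k by apply/andP; split; nra.
have := orth (- (k * p)); apply/negP; rewrite -ltNge norm_vec2 normr1 (max_idPl (ltW c1)).
rewrite vec2Z vec2D; apply/norm_vec2_lt; move: kpp kpq => /andP[? ?] /andP[? ?].
by split; rewrite /k in k_gt0 *; nra.
Qed.

Lemma convex_eq1 t a b : 0 < t < 1 -> a <= 1 -> b <= 1 ->
  t * a + (1 - t) * b = 1 -> a = 1 /\ b = 1.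
Proof. by move=> /andP[? ?] ? ? ?; split; nra. Qed.

Lemma exists_small_pos r : 0 < r -> exists e : R, [/\ 0 < e, e < r & e <= 2^-1].
Proof.
move=> r_gt0; exists (Num.min r 1 / 2).
have m_gt0 : 0 < Num.min r 1 by rewrite lt_min r_gt0 ltr01.
have [? ?] : Num.min r 1 <= r /\ Num.min r 1 <= 1 by split; rewrite ge_min lexx ?orbT.
by split; lra.
Qed.

Lemma weak_cpp_vec2_11_1N : weak_cpp (vec2 1 1) (vec2 (R:=R) 1 (-1)).
Proof.
have n11 : `|vec2 (R:=R) 1 1| = 1 by rewrite norm_vec2_fst ?normr1.
have n1N : `|vec2 (R:=R) 1 (-1)| = 1 by rewrite norm_vec2_fst ?normrN ?normr1.
exists 1, 1; split=> //; split=> //; exists (vec2 1 (-1)), (vec2 1 1).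
split; [|split=> //; split; [|split=> //]].
- move=> l; rewrite n11 vec2Z vec2D; apply/norm_vec2_ge.
  by have [?|?] := lerP 0 l; [constructor 1 | constructor 3]; lra.
- move=> l; rewrite n1N vec2Z vec2D; apply/norm_vec2_ge.
  by have [?|?] := lerP 0 l; [constructor 1 | constructor 4]; lra.
- move=> a b; rewrite !vec2Z !vec2D vec2B => /norm_vec2_lt[? ? ? ?].
  by move=> /norm_vec2_eq[[? ? ? ?] _]; apply/norm_vec2_le; split; lra.
Qed.

Lemma not_cpp_vec2_vertices c d : `|c| = 1 -> `|d| = 1 ->
  ~ cpp (vec2 1 d) (vec2 (R:=R) 1 c).
Proof.
move=> c1 d1 [r [mu [r_gt0 [mu_gt0 compat]]]].
have [e [e_gt0 e_lt_r e_le]] := exists_small_pos r_gt0.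
have emu : 0 < e * mu by rewrite mulr_gt0.
have xz : BJ_orth (vec2 1 d) (vec2 1 0) by apply: BJ_orth_vec2_fst; rewrite ?normr1.
have yw : BJ_orth (vec2 1 c) (vec2 (-1) 0) by apply: BJ_orth_vec2_fst; rewrite ?normr1.
have z1 : `|vec2 (R:=R) 1 0| = 1 by rewrite norm_vec2_fst normr1 // normr0.
have w1 : `|vec2 (R:=R) (-1) 0| = 1 by rewrite norm_vec2_fst normrN normr1 // normr0.
have near : `|(1 *: vec2 1 d + (- e) *: vec2 1 0) - vec2 1 d| < r.
  by rewrite !vec2Z vec2D vec2B; apply/norm_vec2_lt; split; lra.
have unit : `|1 *: vec2 1 d + (- e) *: vec2 1 0| = 1.
  rewrite !vec2Z vec2D !mul1r !mulr1 mulr0 addr0 norm_vec2_snd d1 //.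
  by rewrite ler_norml; apply/andP; split; lra.
have := compat _ _ xz z1 yw w1 _ _ near unit.
by rewrite !vec2Z !vec2D => /norm_vec2_le[_ ? _ _]; lra.
Qed.

Lemma weak_cpp_vec2_10_1h : weak_cpp (vec2 1 0) (vec2 (R:=R) 1 (1/2)).
Proof.
have n01 : `|vec2 (R:=R) 0 1| = 1 by rewrite norm_vec2_snd normr1 // normr0.
exists (1/2), 1; split; first lra; split=> //; exists (vec2 0 1), (vec2 0 1).
split; [|split=> //; split; [|split=> //]].
- by apply: BJ_orth_vec2_snd; rewrite ?normr1 ?normr0.
- by apply: BJ_orth_vec2_snd; rewrite ?normr1 // ger0_norm; lra.
- move=> a b; rewrite !vec2Z !vec2D vec2B => /norm_vec2_lt[? ? ? ?].
  by move=> /norm_vec2_eq[[? ? ? ?] [] ?]; apply/norm_vec2_le; split; lra.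
Qed.

Lemma not_weak_cpp_vec2_10_11 : ~ weak_cpp (vec2 1 0) (vec2 (R:=R) 1 1).
Proof.
move=> [r [mu [r_gt0 [mu_gt0 [z [w [xz [z1 [yw [w1 compat]]]]]]]]]].
have [p [q zE]] := vec2_surj z; have [c [d wE]] := vec2_surj w; subst z w.
have p0 : p = 0 by apply: (BJ_orth_vec2_smooth _ _ xz); rewrite ?normr0 ?z1.
subst p; move: z1; rewrite norm_vec2_snd ?normr0 // => q1.
move: w1 => /norm_vec2_eq[[? ? ? ?] w1].
have [e [e_gt0 e_lt_r e_le]] := exists_small_pos r_gt0.
have emu : 0 < e * mu by rewrite mulr_gt0.
(* Push whichever coordinate of [w] has modulus 1 outwards, by the sign of [b]. *)
have [b [b_e key]] : exists b, `|b| = e /\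
    (e * mu <= b * (mu * c) \/ e * mu <= b * (mu * d)).
  case: w1 => ?; [exists e | exists (- e) | exists e | exists (- e)];
    rewrite ?normrN gtr0_norm //; split=> //; [left | left | right | right]; nra.
have /andP[? ?] : - e <= b * q <= e by rewrite -ler_norml normrM b_e q1 mulr1.
have near : `|(1 *: vec2 1 0 + b *: vec2 0 q) - vec2 1 0| < r.
  by rewrite !vec2Z vec2D vec2B; apply/norm_vec2_lt; split; lra.
have unit : `|1 *: vec2 1 0 + b *: vec2 0 q| = 1.
  by rewrite !vec2Z vec2D; apply/norm_vec2_eq; split; [split | constructor 1]; lra.
have := compat 1 b near unit; rewrite !vec2Z vec2D => /norm_vec2_le[? ? ? ?].
by case: key; lra.
Qed.

Lemma cpp_vec2_11_10 : cpp (vec2 1 1) (vec2 (R:=R) 1 0).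
Proof.
exists 1, (1/2); split=> //; split; first lra.
move=> z w xz z1 yw w1 a b _ n1.
have x1 : `|vec2 (R:=R) 1 1| = 1 by rewrite norm_vec2_fst ?normr1.
have a1 : `|a| <= 1 by rewrite -n1 BJ_orth_coef_le.
have b2 : `|b| <= 2.
  have := ler_normB (a *: vec2 1 1 + b *: z) (a *: vec2 1 1).
  by rewrite addrC addKr n1 !normrZ z1 x1 !mulr1; lra.
have [c [d wE]] := vec2_surj w; subst w.
have c0 : c = 0 by apply: (BJ_orth_vec2_smooth _ _ yw); rewrite ?normr0 ?w1.
subst c; move: w1; rewrite norm_vec2_snd ?normr0 // => d1.
have /andP[? ?] : -2 <= b * d <= 2 by rewrite -ler_norml normrM d1 mulr1.
move: a1; rewrite ler_norml => /andP[? ?].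
by rewrite !vec2Z vec2D; apply/norm_vec2_le; split; lra.
Qed.

Lemma not_extreme_vec2_10 : ~ extreme_point_ball (vec2 (R:=R) 1 0).
Proof.
move=> ext.
have n_add : `|vec2 1 0 + vec2 (R:=R) 0 1| <= 1.
  by rewrite vec2D addr0 add0r norm_vec2_fst ?normr1.
have n_sub : `|vec2 1 0 - vec2 (R:=R) 0 1| <= 1.
  by rewrite vec2B subr0 sub0r norm_vec2_fst ?normrN ?normr1.
have := extreme_point_ball_sym ext n_add n_sub.
by rewrite -(scale0r (vec2 (R:=R) 0 0)) vec2Z => /vec2_inj[_]; lra.
Qed.

Lemma extreme_vec2_11 : extreme_point_ball (vec2 (R:=R) 1 1).
Proof.
split=> [|u v t]; first by rewrite norm_vec2_fst ?normr1.
have [u_1 [u_2 ->]] := vec2_surj u; have [v_1 [v_2 ->]] := vec2_surj v.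
move=> /norm_vec2_le[_ u1 _ u2] /norm_vec2_le[_ v1 _ v2] t01.
rewrite !vec2Z vec2D => /vec2_inj[e1 e2].
have [-> ->] := convex_eq1 t01 u1 v1 (esym e1).
by have [-> ->] := convex_eq1 t01 u2 v2 (esym e2).
Qed.

End LinfTwoExamples.

Theorem mainTheorem1 (R : realType) :
  (* (i) *)
  ((forall (X Y : completeNormedModType R) (x : X) (y : Y),
      dim_gt1 X -> dim_gt1 Y -> `|x| = 1 -> `|y| = 1 ->
      cpp x y -> weak_cpp x y) /\
   weak_cpp (vec2 (R:=R) 1 1) (vec2 1 (-1)) /\ ~ cpp (vec2 (R:=R) 1 1) (vec2 1 (-1))) /\
  (* (ii) *)
  (forall (H : completeNormedModType R) (ip : H -> H -> R),
      dim_gt1 H -> is_inner_product ip ->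
      forall x y : H, `|x| = 1 -> `|y| = 1 ->
      cpp x y /\ forall r : R, 0 < r -> cpp_const x y r 1) /\
  (* (iii) *)
  ((forall (X : completeNormedModType R) (x : X),
      dim_gt1 X -> `|x| = 1 -> weak_cpp x x) /\
   ~ cpp (vec2 (R:=R) 1 1) (vec2 1 1)) /\
  (* (iv) *)
  (weak_cpp (vec2 (R:=R) 1 0) (vec2 1 (1/2)) /\ ~ weak_cpp (vec2 (R:=R) 1 0) (vec2 1 1)) /\
  (* (v) *)
  (forall (X Y : completeNormedModType R) (x : X) (y : Y),
      dim_gt1 X -> dim_gt1 Y -> `|x| = 1 -> `|y| = 1 ->
      forall r0 mu0 : R,
      (weak_cpp_const x y r0 mu0 ->
         forall r mu : R, 0 < r <= r0 -> 0 < mu <= mu0 -> weak_cpp_const x y r mu) /\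
      (cpp_const x y r0 mu0 ->
         forall r mu : R, 0 < r <= r0 -> 0 < mu <= mu0 -> cpp_const x y r mu)) /\
  (* (vi) *)
  ((forall (X Y : completeNormedModType R) (x : X) (y : Y),
      dim_gt1 X -> dim_gt1 Y -> `|x| = 1 -> `|y| = 1 ->
      cpp x y -> ~ extreme_point_ball x -> ~ extreme_point_ball y) /\
   (cpp (vec2 (R:=R) 1 1) (vec2 1 0) /\ ~ extreme_point_ball (vec2 (R:=R) 1 0) /\
    extreme_point_ball (vec2 (R:=R) 1 1))).
Proof.
split.
  split; first by move=> X Y x y dX dY x1 y1; exact: cpp_weak_cpp.
  split; first exact: weak_cpp_vec2_11_1N.
  by apply: not_cpp_vec2_vertices; rewrite ?normrN normr1.
split.
  move=> H ip _ ipP x y x1 y1.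
  have cst r : 0 < r -> cpp_const x y r 1 := inner_product_cpp_const ipP x1 y1.
  by split=> //; exists 1, 1; exact: cst.
split.
  split; first by move=> X x dX x1; exact: weak_cpp_diag.
  by apply: not_cpp_vec2_vertices; rewrite normr1.
split; first by split; [exact: weak_cpp_vec2_10_1h | exact: not_weak_cpp_vec2_10_11].
split.
  move=> X Y x y _ _ x1 y1 r0 mu0.
  by split=> c r mu; [exact: weak_cpp_constW c | exact: cpp_constW c].
split; first by move=> X Y x y _ dY x1 y1; exact: cpp_not_extreme.
split; first exact: cpp_vec2_11_10.
by split; [exact: not_extreme_vec2_10 | exact: extreme_vec2_11].
Qed.
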